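(* Let $M$ be a finite abelian group of exponent greater than $2$, and let $f$ be a half-automorphism of $L_M$. Then $f((K,1))\in\mathcal{H}_M$.
   Context: Let $K=\{1,a,b,c\}$ be the Klein four-group. Set $L_M=K\times M$ with the operation $(A,x)*(B,y)=(AB,xy)$ if $B=1$, and $(A,x)*(B,y)=(AB,x^{-1}y)$ if $B\neq 1$. Write $(K,1)=\{(A,1):A\in K\}$ and $(1,M)=\{(1,x):x\in M\}$. Let $\mathcal{H}_M$ be the set of subloops $H$ of $L_M$ that are isomorphic to $K$ and satisfy $|H\cap(1,M)|=1$. A half-automorphism of a loop $L$ is a bijection $f:L\to L$ such that $f(XY)\in\{f(X)f(Y),f(Y)f(X)\}$ for all $X,Y\in L$. *)

From HB Require Import structures.
From mathcomp Require Import all_boot all_fingroup all_solvable.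
Set Implicit Arguments. Unset Strict Implicit. Unset Printing Implicit Defensive.
Local Open Scope group_scope.

(* The Klein four-group K = {1,a,b,c}, realised as bool*bool with
   componentwise xor: 1 = (false,false), a = (true,false),
   b = (false,true), c = (true,true). *)
Definition Klein := (bool * bool)%type.
Definition kone : Klein := (false, false).
Definition kmul (A B : Klein) : Klein := (A.1 (+) B.1, A.2 (+) B.2).

Definition LM (M : finGroupType) := (Klein * M)%type.

Definition lmul (M : finGroupType) (X Y : LM M) : LM M :=
  if Y.1 == kone then (kmul X.1 Y.1, X.2 * Y.2)
  else (kmul X.1 Y.1, X.2^-1 * Y.2).

Definition lone (M : finGroupType) : LM M := (kone, 1).

Definition K1 (M : finGroupType) : {set LM M} := [set X | X.2 == 1].
Definition oneM (M : finGroupType) : {set LM M} := [set X | X.1 == kone].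

Definition subloop (M : finGroupType) (H : {set LM M}) : Prop :=
  [/\ lone M \in H,
      (forall X Y, X \in H -> Y \in H -> lmul X Y \in H),
      (forall X Y Z, X \in H -> Y \in H -> lmul X Z = Y -> Z \in H) &
      (forall X Y Z, X \in H -> Y \in H -> lmul Z X = Y -> Z \in H)].

Definition iso_to_Klein (M : finGroupType) (H : {set LM M}) : Prop :=
  exists g : Klein -> LM M,
    [/\ injective g, g @: [set: Klein] = H &
        forall A B, g (kmul A B) = lmul (g A) (g B)].

Definition in_HM (M : finGroupType) (H : {set LM M}) : Prop :=
  [/\ subloop H, iso_to_Klein H & #|H :&: oneM M| = 1%N].

Definition half_automorphism (M : finGroupType) (f : LM M -> LM M) : Prop :=
  bijective f /\
  forall X Y, f (lmul X Y) = lmul (f X) (f Y) \/ f (lmul X Y) = lmul (f Y) (f X).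

From mathcomp Require Import all_boot all_fingroup all_solvable.
Set Implicit Arguments. Unset Strict Implicit. Unset Printing Implicit Defensive.

(* Elements of L_M outside (1,M) square to 1, and squaring is preserved by a
   half-automorphism f; so f maps the elements of (1,M) with square <> 1, which
   exist because exp M > 2, into (1,M). If f sent some (A,x) with A <> 1 into
   (1,M), then f((A,x)(1,t)) would be a product of two elements of (1,M) whose
   square is <> 1, although (A,x)(1,t) squares to 1. Hence f((K,1)) meets (1,M)
   only in 1. Comparing f on the non-commuting pairs (A,1),(B,t) and
   (AB,1),(1,t) shows that the M-components of f(A,1) are involutions; such
   elements commute in L_M, so A |-> f(A,1) is a monomorphism K -> L_M. *)

Local Open Scope group_scope.

Lemma kmulC : commutative kmul.
Proof. by case=> [[] []] [[] []]. Qed.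

Lemma kmul1g : left_id kone kmul.
Proof. by case=> [[] []]. Qed.

Lemma kmulg1 : right_id kone kmul.
Proof. by case=> [[] []]. Qed.

Lemma kmulgg (A : Klein) : kmul A A = kone.
Proof. by case: A => [[] []]. Qed.

Lemma kmulK (A : Klein) : cancel (kmul A) (kmul A).
Proof. by case: A => [[] []] [[] []]. Qed.

Lemma kmulKr (A : Klein) : cancel (kmul^~ A) (kmul^~ A).
Proof. by case: A => [[] []] [[] []]. Qed.

Lemma kmul_factor (C : Klein) :
  exists A B, [/\ A != kone, B != kone & kmul A B = C].
Proof.
case: C => [[] []].
- by exists (true, false), (false, true).
- by exists (false, true), (true, true).
- by exists (true, false), (true, true).
- by exists (true, false), (true, false).
Qed.

Lemma exists_sqr_neq1 (M : finGroupType) :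
  2 < exponent [set: M] -> exists t : M, t * t != 1.
Proof.
move=> expM; case: (pickP (fun t : M => t * t != 1)) => [t t2 | all2].
  by exists t.
have : exponent [set: M] %| 2.
  by apply/exponentP => x _; rewrite expgS expg1; apply/eqP/negbFE/all2.
by move/(dvdn_leq (isT : 0 < 2)); rewrite leqNgt expM.
Qed.

Section LoopLM.

Variable M : finGroupType.
Implicit Types X Y : LM M.

Lemma lmulE A (x : M) B y :
  lmul (A, x) (B, y) = (kmul A B, (if B == kone then x else x^-1) * y).
Proof. by rewrite /lmul /=; case: ifP. Qed.

Lemma lmul1l : left_id (lone M) (@lmul M).
Proof. by case=> A x; rewrite /lone lmulE kmul1g invg1 if_same mul1g. Qed.

Lemma lmul1r : right_id (lone M) (@lmul M).
Proof. by case=> A x; rewrite /lone lmulE kmulg1 mulg1. Qed.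

Lemma lmul_lcancel X : injective (lmul X).
Proof.
case: X => A x [B y] [C z]; rewrite !lmulE => e.
have /(can_inj (kmulK A)) BC : kmul A B = kmul A C := congr1 fst e.
by move: (congr1 snd e); rewrite BC /= => /mulgI ->.
Qed.

Lemma lmul_rcancel X : injective (fun Y => lmul Y X).
Proof.
case: X => A x [B y] [C z]; rewrite !lmulE => e.
have /(can_inj (kmulKr A)) BC : kmul B A = kmul C A := congr1 fst e.
by move: (congr1 snd e); rewrite BC /=; case: ifP => _ /mulIg => [|/invg_inj] ->.
Qed.

Lemma lmul_idem X : lmul X X = X -> X = lone M.
Proof. by move=> XX; apply: (@lmul_lcancel X); rewrite XX lmul1r. Qed.

Lemma lmul_self_eq1 X :
  (lmul X X == lone M) = (X.1 != kone) || (X.2 * X.2 == 1).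
Proof.
case: X => A x; rewrite lmulE kmulgg /lone xpair_eqE eqxx /=.
by case: ifP; rewrite /= ?mulVg ?eqxx.
Qed.

Hypothesis M_abelian : abelian [set: M].

Lemma abelian_mulC (x y : M) : x * y = y * x.
Proof. by apply: (centsP M_abelian); rewrite inE. Qed.

Lemma abelian_sqrM (x y : M) : (x * y) * (x * y) = (x * x) * (y * y).
Proof. by rewrite -mulgA (mulgA y) (abelian_mulC y) !mulgA. Qed.

Lemma lmul_oneMC X Y : X.1 = kone -> Y.1 = kone -> lmul X Y = lmul Y X.
Proof. by case: X Y => A x [B y] /= -> ->; rewrite !lmulE eqxx abelian_mulC. Qed.

Lemma lmul_involC X Y :
  X.2 * X.2 = 1 -> Y.2 * Y.2 = 1 -> lmul X Y = lmul Y X.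
Proof.
case: X Y => A x [B y] /= /eqP x2 /eqP y2.
rewrite -eq_invg_mul in x2; rewrite -eq_invg_mul in y2.
by rewrite !lmulE (eqP x2) (eqP y2) kmulC !if_same abelian_mulC.
Qed.

End LoopLM.

Section HalfAutomorphism.

Variables (M : finGroupType) (f : LM M -> LM M).
Hypothesis f_inj : injective f.
Hypothesis f_half : forall X Y,
  f (lmul X Y) = lmul (f X) (f Y) \/ f (lmul X Y) = lmul (f Y) (f X).

Lemma half_aut_sqr X : f (lmul X X) = lmul (f X) (f X).
Proof. by case: (f_half X X). Qed.

Lemma half_aut1 : f (lone M) = lone M.
Proof. by apply: lmul_idem; rewrite -half_aut_sqr lmul1l. Qed.

Lemma half_aut_self_eq1 X :
  (lmul (f X) (f X) == lone M) = (lmul X X == lone M).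
Proof. by rewrite -half_aut_sqr -{1}half_aut1 (inj_eq f_inj). Qed.

Lemma half_aut_oneM (t : M) :
  t * t != 1 -> (f (kone, t)).1 = kone /\ (f (kone, t)).2 * (f (kone, t)).2 != 1.
Proof.
move=> t2; have := half_aut_self_eq1 (kone, t).
rewrite !lmul_self_eq1 /= (negbTE t2) => /negbT.
by rewrite negb_or negbK => /andP[/eqP].
Qed.

Hypothesis M_abelian : abelian [set: M].
Hypothesis M_exponent : 2 < exponent [set: M].

Lemma half_aut_fst_neq1 A x : A != kone -> (f (A, x)).1 != kone.
Proof.
move=> nA; apply/eqP => fX1; have [t t2] := exists_sqr_neq1 M_exponent.
have [fY1 fY2] := half_aut_oneM t2.
have fX2 : (f (A, x)).2 * (f (A, x)).2 = 1.
  by apply/eqP; have := half_aut_self_eq1 (A, x); rewrite !lmul_self_eq1 fX1 nA.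
have fXY : f (lmul (A, x) (kone, t)) = lmul (f (A, x)) (f (kone, t)).
  by case: (f_half (A, x) (kone, t)) => -> //; rewrite lmul_oneMC.
have := half_aut_self_eq1 (lmul (A, x) (kone, t)).
rewrite fXY !lmul_self_eq1 lmulE /= kmulg1 nA.
move: fX1 fY1 fX2 fY2; case: (f (A, x)) => A' u; case: (f (kone, t)) => B' n.
move=> /= -> -> u2 /negbTE n2; rewrite lmulE eqxx /= abelian_sqrM //.
by rewrite u2 mul1g n2.
Qed.

(* f permutes the pair {XY, YX}, hence (M being abelian) preserves the product
   of their M-components. *)
Lemma half_aut_swap_snd X Y : lmul X Y != lmul Y X ->
  (f (lmul X Y)).2 * (f (lmul Y X)).2 = (lmul (f X) (f Y)).2 * (lmul (f Y) (f X)).2.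
Proof.
move=> nXY; have nf : f (lmul X Y) != f (lmul Y X) by rewrite (inj_eq f_inj).
case: (f_half X Y) => eXY; case: (f_half Y X) => eYX; rewrite eXY eYX in nf *.
- by [].
- by rewrite eqxx in nf.
- by rewrite eqxx in nf.
- exact: abelian_mulC.
Qed.

Lemma half_aut_snd_sqr C : (f (C, 1)).2 * (f (C, 1)).2 = 1.
Proof.
have [-> | nC] := eqVneq C kone; first by rewrite half_aut1 mulg1.
have [A [B [nA nB AB]]] := kmul_factor C.
have [t t2] := exists_sqr_neq1 M_exponent.
have nt : (C, t) != (C, t^-1).
  by rewrite xpair_eqE eqxx /=; apply: contraNneq t2 => {2}->; rewrite mulgV.
have := half_aut_swap_snd (X := (A, 1)) (Y := (B, t)).
rewrite !lmulE (negbTE nA) (negbTE nB) invg1 mul1g mulg1 (kmulC B) AB.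
move=> /(_ nt); have fA := half_aut_fst_neq1 1 nA.
have fB := half_aut_fst_neq1 t nB.
move: fA fB; case: (f (A, 1)) => A' p; case: (f (B, t)) => B' q /= nA' nB'.
rewrite !lmulE (negbTE nA') (negbTE nB') /= mulgA mulgK mulVg => fCt.
have := half_aut_swap_snd (X := (C, 1)) (Y := (kone, t)).
rewrite !lmulE (negbTE nC) eqxx kmulg1 kmul1g mul1g mulg1 => /(_ nt).
have [fT1 _] := half_aut_oneM t2; have fC := half_aut_fst_neq1 1 nC.
move: fT1 fC; case: (f (C, 1)) => C' z; case: (f (kone, t)) => _ n /= -> nC'.
by rewrite fCt !lmulE eqxx (negbTE nC') /= mulgA mulgK => <-.
Qed.

Lemma half_aut_Klein_morph :
  {morph (fun A => f (A, 1)) : A B / kmul A B >-> lmul A B}.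
Proof.
move=> A B /=; have <- : lmul (A, 1) (B, 1) = (kmul A B, 1 : M).
  by rewrite lmulE invg1 if_same mulg1.
by case: (f_half (A, 1) (B, 1)) => -> //; apply: lmul_involC;
  rewrite ?half_aut_snd_sqr.
Qed.

End HalfAutomorphism.

Lemma in_HM_imset (M : finGroupType) (g : Klein -> LM M) :
  injective g -> {morph g : A B / kmul A B >-> lmul A B} ->
  (forall A, A != kone -> (g A).1 != kone) -> in_HM (g @: [set: Klein]).
Proof.
move=> g_inj gM g_fst.
have g1 : g kone = lone M by apply: lmul_idem; rewrite -gM kmulgg.
split; [split | by exists g |].
- by rewrite -g1 imset_f.
- by move=> _ _ /imsetP[A _ ->] /imsetP[B _ ->]; rewrite -gM imset_f.
- move=> _ _ Z /imsetP[A _ ->] /imsetP[B _ ->] AZ.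
  suff -> : Z = g (kmul A B) by rewrite imset_f.
  by apply: (@lmul_lcancel _ (g A)); rewrite AZ -gM kmulK.
- move=> _ _ Z /imsetP[A _ ->] /imsetP[B _ ->] ZA.
  suff -> : Z = g (kmul B A) by rewrite imset_f.
  by apply: (@lmul_rcancel _ (g A)); rewrite /= ZA -gM kmulKr.
- suff -> : g @: [set: Klein] :&: oneM M = [set lone M] by rewrite cards1.
  apply/setP => Y; rewrite !inE; apply/andP/eqP => [[/imsetP[A _ ->] gA1] | ->].
    by have [-> // | /g_fst] := eqVneq A kone; rewrite gA1.
  by split; rewrite // -g1 imset_f.
Qed.

Lemma K1E (M : finGroupType) : K1 M = (fun A => (A, 1)) @: [set: Klein].
Proof.
apply/setP => -[A x]; rewrite inE /=.
by apply/eqP/imsetP => [-> | [B _ [_ ->]]] //; exists A; rewrite ?in_setT.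
Qed.

Theorem proposition4p2 (M : finGroupType) (f : LM M -> LM M) :
  abelian [set: M] -> 2 < exponent [set: M] ->
  half_automorphism f -> in_HM (f @: K1 M).
Proof.
move=> M_abelian M_exponent [/bij_inj f_inj f_half].
rewrite K1E -imset_comp; apply: in_HM_imset.
- by move=> A B /f_inj [].
- exact: half_aut_Klein_morph.
- by move=> A; apply: half_aut_fst_neq1.
Qed.
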